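(* Let $G$ be a first-countable Hausdorff compact topological monoid with neutral element $e$, and let $f:G\to G$ be a closed mapping such that for each $x,y\in G$ and each neighbourhood $V$ of $e$ there exist $z\in G$ and $n\in\mathbb{N}$ with $f^n(x),f^n(y)\in zV$. Then $f$ has a unique fixed point.
   Context: A topological monoid is a semigroup with neutral element, equipped with a topology making multiplication jointly continuous. A mapping is closed if it maps closed sets to closed sets (continuity is not assumed). $zV=\{zv:v\in V\}$; $f^n$ is the $n$-fold iterate of $f$. *)

From mathcomp Require Import all_boot all_order.
From mathcomp Require Import all_classical all_reals all_analysis.
Set Implicit Arguments. Unset Strict Implicit. Unset Printing Implicit Defensive.
Local Open Scope classical_set_scope.

(* First countability: every point has a countable neighbourhood base
   (indexed by nat, repetitions allowed, so finite bases are included). *)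
Definition first_countable (T : topologicalType) : Prop :=
  forall x : T, exists B : nat -> set T,
    (forall n, nbhs x (B n)) /\ (forall U, nbhs x U -> exists n, B n `<=` U).

Definition closed_map (T : topologicalType) (f : T -> T) : Prop :=
  forall A : set T, closed A -> closed (f @` A).

Definition topological_monoid (T : topologicalType) (mul : T -> T -> T) (e : T)
  : Prop :=
  (forall x y z, mul x (mul y z) = mul (mul x y) z) /\
  (forall x, mul e x = x) /\ (forall x, mul x e = x) /\
  continuous (fun p : T * T => mul p.1 p.2).

Definition lmul_set (T : Type) (mul : T -> T -> T) (z : T) (V : set T) : set T :=
  [set mul z v | v in V].

From mathcomp Require Import all_boot all_order.
From mathcomp Require Import all_classical all_reals all_analysis.
Set Implicit Arguments. Unset Strict Implicit. Unset Printing Implicit Defensive.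
Local Open Scope classical_set_scope.

(* Say u and w are V-close if both lie in one translate z V.  If pairs from a
   family are V-close for every neighbourhood V of e, compactness gives a
   cluster point c of the translating points z, and since z v tends to
   c e = c, pairs of the family accumulate at c.  For a single pair this shows
   that distinct points are not V-close for small V, which gives uniqueness,
   and also a fixed point as soon as some orbit is periodic, because a periodic
   orbit contains only finitely many consecutive pairs.  For the consecutive
   orbit points (f^(n+1) e, f^(n+2) e) first countability yields a sequence
   b_k -> c of orbit points with f b_k -> c.  Since f is closed and
   {b_k : k >= K} u {c} is closed, either f c = c or c = f b_k for infinitely
   many k; then either c is periodic, or one orbit point occurs infinitely
   often among these b_k, hence equals c, and again f c = c. *)

Section hausdorff_sequences.
Context {T : topologicalType}.
Hypothesis T_hausdorff : hausdorff_space T.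

Lemma hausdorff_nbhs_eq (c d : T) : (forall U, nbhs c U -> U d) -> c = d.
Proof. by move=> cd; apply: T_hausdorff => A B /cd Ad /nbhs_singleton Bd; exists d. Qed.

Lemma cvg_frequently_eq (u : nat -> T) (c d : T) :
  u @ \oo --> c -> (forall K, exists2 k, (K <= k)%N & u k = d) -> d = c.
Proof.
move=> uc ud; apply/esym/hausdorff_nbhs_eq => U /uc [K _ KU].
by have [k Kk <-] := ud K; exact: KU.
Qed.

Lemma closed_cvg_tail (u : nat -> T) (c : T) (K : nat) :
  u @ \oo --> c -> closed (u @` [set k | (K <= k)%N] `|` [set c]).
Proof.
move=> uc y cly; apply: contrapT => yS; apply: (yS); right.
apply: T_hausdorff => A B yA /[dup] /nbhs_singleton Bc /uc [N _ NB].
pose F := u @` [set k | (K <= k < N)%N].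
have F_closed : closed F.
  apply: (accessible_finite_set_closed.1 (hausdorff_accessible T_hausdorff)).
  by apply: finite_image; apply: sub_finite_set (finite_II N) => k /andP[].
have yF : nbhs y (~` F).
  apply: open_nbhs_nbhs; split; first by rewrite openC.
  by move=> [k /andP[Kk _] uky]; apply: yS; left; exists k.
have [t [[[k Kk <-]|->] [At Ft]]] := cly _ (filterI yA yF); last by exists c.
exists (u k); split => //; apply: NB; rewrite /= leqNgt; apply/negP => kN.
by apply: Ft; exists k => //; apply/andP.
Qed.

Lemma closed_map_cvg (f : T -> T) (u : nat -> T) (c : T) :
  closed_map f -> u @ \oo --> c -> f \o u @ \oo --> c ->
  f c = c \/ forall K, exists2 k, (K <= k)%N & f (u k) = c.
Proof.
move=> f_closed uc fuc; have [fc|nfc] := pselect (f c = c); [by left|right].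
move=> K; have : (f @` (u @` [set k | (K <= k)%N] `|` [set c])) c.
  apply: (closed_cvg _ (f_closed _ (closed_cvg_tail (K:=K) uc)) _ _ fuc).
  by exists K => // k /= Kk; exists (u k) => //; left; exists k.
by case=> _ [[k Kk <-]|->] // fuk; exists k.
Qed.

Lemma frequent_orbit_preimage (f : T -> T) (x c : T) (m : nat -> nat) :
  (fun k => iter (m k) f x) @ \oo --> c ->
  (forall K, exists2 k, (K <= k)%N & f (iter (m k) f x) = c) ->
  f c = c \/ exists p, iter p.+1 f c = c.
Proof.
move=> orbit_c hit; have [k1 _ hit1] := hit 0%N.
have [[k [hitk ltk1]]|] := pselect (exists k,
    f (iter (m k) f x) = c /\ m k <> m k1); last first.
  move=> same; left; suff d_c : iter (m k1) f x = c by rewrite -{1}d_c.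
  apply: (cvg_frequently_eq orbit_c) => K; have [k Kk hitk] := hit K.
  by exists k => //; congr iter; apply: contrapT => mk; apply: same; exists k.
right; have periodic a b : (m a < m b)%N -> f (iter (m a) f x) = c ->
    f (iter (m b) f x) = c -> exists p, iter p.+1 f c = c.
  move=> lt_ab hita hitb; exists (m b - m a).-1; rewrite prednK ?subn_gt0 //.
  by rewrite -{1}hita -iterS -iterD addnS subnK ?iterS // ltnW.
by case: (ltngtP (m k) (m k1)) => // lt; apply: periodic lt _ _.
Qed.

End hausdorff_sequences.

Lemma first_countable_witness_seq (T : topologicalType) (X : Type)
    (Q : X -> set T -> Prop) (c : T) :
  first_countable T ->
  (forall x U V, U `<=` V -> Q x U -> Q x V) ->
  (forall U, nbhs c U -> exists x, Q x U) ->
  exists u : nat -> X, forall U, nbhs c U -> \forall k \near \oo, Q (u k) U.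
Proof.
move=> T_fc QS Qc; have [B [cB Bbase]] := T_fc c.
pose D k := [set t | forall i : 'I_k.+1, B i t].
have cD k : nbhs c (D k) by apply: filter_forall => i; exact: cB.
have [u Du] := choice (fun k => Qc _ (cD k)).
exists u => U /Bbase [n BU]; exists n => // k /= nk.
by apply: QS (Du k) => t /(_ (Ordinal (nk : (n < k.+1)%N))) /BU.
Qed.

Lemma lmul_setS (T : Type) (mul : T -> T -> T) (z : T) (V W : set T) :
  V `<=` W -> lmul_set mul z V `<=` lmul_set mul z W.
Proof. exact: image_subset. Qed.

Section compact_monoid.
Variables (T : topologicalType) (mul : T -> T -> T) (e : T).
Hypothesis mul_e : forall x, mul x e = x.
Hypothesis mul_continuous : continuous (fun p : T * T => mul p.1 p.2).
Hypothesis T_compact : compact [set: T].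

Lemma lmul_set_cluster (P : T -> T -> Prop) :
  (forall V, nbhs e V -> exists z a b,
     [/\ P a b, lmul_set mul z V a & lmul_set mul z V b]) ->
  exists c : T, forall U, nbhs c U -> exists a b, [/\ P a b, U a & U b].
Proof.
move=> Pclose.
pose Z V := [set z | exists a b,
  [/\ P a b, lmul_set mul z V a & lmul_set mul z V b]].
have ZS V W : V `<=` W -> Z V `<=` Z W.
  move=> VW z [a [b [Pab za zb]]]; exists a, b.
  by split; [|exact: lmul_setS VW _ za|exact: lmul_setS VW _ zb].
have ZF : ProperFilter (filter_from (nbhs e : set_system T) Z).
  apply: filter_from_proper => [|V /Pclose [z Zz]]; last by exists z.
  apply: filter_from_filter; first by exists setT; exact: filterT.
  move=> V W eV eW; exists (V `&` W); first exact: filterI.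
  by move=> z Zz; split; apply: ZS Zz => ? [].
have [c [_ c_cluster]] := T_compact ZF filterT.
exists c => U cU.
have := @mul_continuous (c, e) U; rewrite /= mul_e => /(_ cU).
move=> [[A B] /= [cA eB] ABU].
have [z [[a [b [Pab [v Bv za] [w Bw zb]]]] Az]] :
    Z B `&` A !=set0 by apply: c_cluster cA; exists B.
subst a b.
exists (mul z v), (mul z w).
by split => //; [apply: (ABU (z, v))|apply: (ABU (z, w))].
Qed.

Hypothesis T_hausdorff : hausdorff_space T.

Lemma lmul_set_separate (u w : T) : u <> w ->
  exists2 V, nbhs e V & forall z, ~ (lmul_set mul z V u /\ lmul_set mul z V w).
Proof.
move=> uw; apply: contrapT => nosep; apply: uw.
have [|c cuw] := lmul_set_cluster (P := fun a b => a = u /\ b = w).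
  move=> V eV; apply: contrapT => noz; apply: nosep; exists V => // z [zu zw].
  by apply: noz; exists z, u, w.
have cu : c = u by apply: hausdorff_nbhs_eq => // U /cuw [a [b [[-> _]]]].
have cw : c = w by apply: hausdorff_nbhs_eq => // U /cuw [a [b [[_ ->]]]].
by rewrite -cu -cw.
Qed.

Variable f : T -> T.
Hypothesis f_close : forall (x y : T) (V : set T), nbhs e V ->
  exists (z : T) (n : nat),
    lmul_set mul z V (iter n.+1 f x) /\ lmul_set mul z V (iter n.+1 f y).

Lemma periodic_fixed (c : T) (p : nat) : iter p.+1 f c = c -> exists q, f q = q.
Proof.
move=> c_periodic; apply: contrapT => nofix.
have /choice [V Vsep] : forall i : 'I_p.+1, exists V, nbhs e V /\ forall z,
    ~ (lmul_set mul z V (iter i f c) /\ lmul_set mul z V (f (iter i f c))).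
  move=> i; have [|V eV ?] := @lmul_set_separate (iter i f c) (f (iter i f c)).
    by move=> fi; apply: nofix; exists (iter i f c).
  by exists V.
have eW : nbhs e [set t | forall i, V i t].
  by apply: filter_forall => i; case: (Vsep i).
have [z [n [zc zfc]]] := f_close c (f c) eW.
have iter_mod m : iter m f c = iter (m %% p.+1) f c.
  rewrite {1}(divn_eq m p.+1) addnC iterD; congr iter.
  by elim: (m %/ p.+1) => // q IH; rewrite mulSn iterD IH.
have i_lt : (n.+1 %% p.+1 < p.+1)%N by rewrite ltn_pmod.
apply: (proj2 (Vsep (Ordinal i_lt)) z); split => /=.
  by rewrite -iter_mod; apply: lmul_setS zc => t; apply.
by rewrite -iter_mod -iterS iterSr; apply: lmul_setS zfc => t; apply.
Qed.

End compact_monoid.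

Theorem theorem15 (T : topologicalType) (mul : T -> T -> T) (e : T)
  (f : T -> T) :
  topological_monoid mul e ->
  first_countable T ->
  hausdorff_space T ->
  compact [set: T] ->
  closed_map f ->
  (forall (x y : T) (V : set T), nbhs e V ->
     exists (z : T) (n : nat),
       lmul_set mul z V (iter n.+1 f x) /\ lmul_set mul z V (iter n.+1 f y)) ->
  exists! p : T, f p = p.
Proof.
move=> [_ [_ [mul_e mul_cont]]] T_fc T_hd T_cpt f_closed f_close.
have fix_uniq p q : f p = p -> f q = q -> p = q.
  move=> fp fq; apply: contrapT => /(lmul_set_separate mul_e mul_cont T_cpt T_hd).
  move=> [V eV Vsep]; have [z [n]] := f_close p q V eV.
  by rewrite !iter_fix //; exact: Vsep.
suff [p fp] : exists p, f p = p by exists p; split => // q; exact: fix_uniq.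
have [|c c_pairs] := lmul_set_cluster mul_e mul_cont T_cpt
  (P := fun a b => exists n, a = iter n.+1 f e /\ b = f a).
  move=> V eV; have [z [n [z1 z2]]] := f_close e (f e) V eV.
  exists z, (iter n.+1 f e), (iter n.+2 f e).
  by split => //; [exists n|rewrite iterSr].
have [||m mc] := first_countable_witness_seq T_fc
  (Q := fun n U => U (iter n.+1 f e) /\ U (f (iter n.+1 f e))) (c := c).
- by move=> n U V UV [U1 U2]; split; apply: UV.
- by move=> U /c_pairs [_ [_ [[n [-> ->]] U1 U2]]]; exists n.
have orbit_c : (fun k => iter (m k).+1 f e) @ \oo --> c.
  by move=> U /mc; apply: filterS => k [].
have forbit_c : f \o (fun k => iter (m k).+1 f e) @ \oo --> c.
  by move=> U /mc; apply: filterS => k [].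
case: (closed_map_cvg T_hd f_closed orbit_c forbit_c) => [fc|hit]; first by exists c.
case: (frequent_orbit_preimage T_hd orbit_c hit) => [fc|[p]]; first by exists c.
exact: (periodic_fixed mul_e mul_cont T_cpt T_hd f_close (p := p)).
Qed.
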